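(* Let $Q\subseteq\mathbb{R}^n$ be a convex set, $f:Q\to\mathbb{R}$ a convex function, and consider the problem $\min_{x\in Q}f(x)$ with a solution $x_*$. Let $\|\cdot\|$ be a norm on $\mathbb{R}^n$, let $d$ be a differentiable function that is $1$-strongly convex with respect to $\|\cdot\|$, and let $V(x,y)=d(x)-d(y)-\langle\nabla d(y),x-y\rangle$ be the associated Bregman divergence. Let $L>0$, $\delta\ge0$, $\tilde\delta\ge0$, and suppose that at every point $x\in Q$ we are given a $(\delta,L)$-model $(f_\delta(x);\psi_\delta(\cdot,x))$ of $f$, i.e. $\psi_\delta(\cdot,x)$ is convex on $Q$, $\psi_\delta(x,x)=0$, and for all $y\in Q$ $$0\le f(y)-\bigl(f_\delta(x)+\psi_\delta(y,x)\bigr)\le\frac{L}{2}\|y-x\|^2+\delta.$$ Starting from $x^0\in Q$, let the points $x^{k+1}\in Q$, $k=0,1,\dots$, be inexact minimizers of $\Psi(x,x^k):=\psi_\delta(x,x^k)+L\,V(x,x^k)$ over $x\in Q$ in the following sense: there exists a subgradient $g^{k+1}\in\partial_x\Psi(x,x^k)\big|_{x=x^{k+1}}$ with $$\langle g^{k+1},x^{k+1}-x_*\rangle\le\tilde\delta.$$ Let $R^2=V(x_*,x^0)$ and $\bar x^N=\frac{1}{N}\sum_{k=1}^N x^k$. Then for every $N\ge1$ $$f(\bar x^N)-f(x_* )\le\frac{LR^2}{N}+\tilde\delta+2\delta,$$ and moreover $V(x_*,x^m)\le V(x_*,x^0)$ for every $m\ge1$ such that $f(\bar x^m)-f(x_*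 )\ge\tilde\delta+2\delta$.
   Context: If the solution $x_*$ is not unique, the estimates hold in particular for the solution $x_*$ minimizing $R^2=V(x_*,x^0)$ (the inexactness condition being understood with this $x_*$). *)

From HB Require Import structures.
From mathcomp Require Import all_boot all_order all_algebra.
From mathcomp Require Import all_classical all_reals all_analysis.
Set Implicit Arguments. Unset Strict Implicit. Unset Printing Implicit Defensive.
Import Order.TTheory GRing.Theory Num.Theory.
Import numFieldNormedType.Exports.
Local Open Scope ring_scope.
Local Open Scope classical_set_scope.

Section Defs.
Variables (R : realType) (n : nat).
Notation vec := 'rV[R]_n.

Definition dotv (u v : vec) : R := \sum_(i < n) u ord0 i * v ord0 i.

Definition is_norm (N : vec -> R) : Prop :=
  [/\ forall x, 0 <= N x,
      forall x, N x = 0 -> x = 0,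
      forall (a : R) x, N (a *: x) = `|a| * N x
    & forall x y, N (x + y) <= N x + N y].

Definition convex_fun_on (Q : set vec) (f : vec -> R) : Prop :=
  forall x y (t : R), Q x -> Q y -> 0 <= t <= 1 ->
    f (t *: x + (1 - t) *: y) <= t * f x + (1 - t) * f y.

(* Bregman divergence V(x,y) = d x - d y - <grad d(y), x - y>,
   where <grad d(y), h> is the differential 'd d y applied to h *)
Definition bregman (d : vec -> R) (x y : vec) : R :=
  d x - d y - 'd d y (x - y).

Definition strongly_convex1 (Q : set vec) (N : vec -> R) (d : vec -> R) : Prop :=
  (forall y, Q y -> differentiable d y) /\
  forall x y, Q x -> Q y -> d y + 'd d y (x - y) + 2^-1 * N (x - y) ^+ 2 <= d x.

Definition dL_model (Q : set vec) (N : vec -> R) (f fd : vec -> R)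
  (psi : vec -> vec -> R) (delta L : R) : Prop :=
  forall x, Q x ->
    [/\ convex_fun_on Q (fun y => psi y x), psi x x = 0
      & forall y, Q y ->
          0 <= f y - (fd x + psi y x) <= L / 2 * N (y - x) ^+ 2 + delta].

Definition subgrad_on (Q : set vec) (h : vec -> R) (z g : vec) : Prop :=
  forall y, Q y -> h z + dotv g (y - z) <= h y.

Definition avg_iter (x : nat -> vec) (N : nat) : vec :=
  (N%:R)^-1 *: \sum_(1 <= k < N.+1) x k.

End Defs.

From HB Require Import structures.
From mathcomp Require Import all_boot all_order all_algebra.
From mathcomp Require Import all_classical all_reals all_analysis.
From mathcomp Require Import ring lra.
Set Implicit Arguments. Unset Strict Implicit. Unset Printing Implicit Defensive.
Import Order.TTheory GRing.Theory Num.Theory.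
Import numFieldNormedType.Exports.
Local Open Scope ring_scope.
Local Open Scope classical_set_scope.

(* Each iteration is a Bregman proximal step on the model psi(., x^k).  Testing
   the inexact optimality condition at xs gives the three-point inequality
     psi(x^{k+1}) + L V(x^{k+1},x^k) + L V(xs,x^{k+1})
       <= psi(xs) + L V(xs,x^k) + tdelta,
   and the two model inequalities, with L/2 ||x^{k+1}-x^k||^2 <= L V(x^{k+1},x^k)
   from strong convexity, turn it into
     f(x^{k+1}) - f(xs) <= L V(xs,x^k) - L V(xs,x^{k+1}) + tdelta + delta.
   These inequalities telescope, and by Jensen the gap at the average xbar^N is at
   most L (V(xs,x^0) - V(xs,x^N)) / N + tdelta + delta.  Dropping V(xs,x^N) >= 0
   gives the rate; a gap of at least tdelta + 2 delta leaves a telescoped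
   difference of at least delta >= 0, whence V(xs,x^N) <= V(xs,x^0). *)

Section Rows.
Variables (R : realType) (n : nat).
Implicit Types (Q : set 'rV[R]_n) (u v w : 'rV[R]_n) (t : R).

Lemma convex_set_comb Q u v t :
  convex_set Q -> Q u -> Q v -> 0 <= t <= 1 -> Q (t *: u + (1 - t) *: v).
Proof.
by move=> cQ Qu Qv /andP[t0 t1]; have := cQ u v (Itv01 t0 t1); rewrite !inE; apply.
Qed.

Lemma dotvZr w v t : dotv w (t *: v) = t * dotv w v.
Proof. by rewrite /dotv mulr_sumr; apply: eq_bigr => i _; rewrite mxE mulrCA. Qed.

Lemma dotvNr w v : dotv w (- v) = - dotv w v.
Proof. by rewrite /dotv -sumrN; apply: eq_bigr => i _; rewrite mxE mulrN. Qed.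

Lemma avg_iterS (x : nat -> 'rV[R]_n) m :
  avg_iter x m.+1 = m.+1%:R^-1 *: x m.+1 + (1 - m.+1%:R^-1) *: avg_iter x m.
Proof.
rewrite /avg_iter big_nat_recr //=; case: m => [|m].
  by rewrite big_geq // invr1 subrr scale0r addr0 add0r.
have m_ge0 : 0 <= m%:R :> R := ler0n R m.
apply/rowP => i; rewrite !mxE -[m.+2%:R]natr1 -natr1; field.
by apply/andP; split; apply/lt0r_neq0; lra.
Qed.

Lemma avg_iter_in Q (x : nat -> 'rV[R]_n) m :
  convex_set Q -> (forall k, Q (x k)) -> (0 < m)%N -> Q (avg_iter x m).
Proof.
move=> cQ Qx; case: m => // m _; elim: m => [|m IH].
  by rewrite avg_iterS invr1 subrr scale0r addr0 scale1r.
rewrite avg_iterS; apply: convex_set_comb => //.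
by rewrite invr_ge0 ler0n invf_le1 ?ler1n ?ltr0n.
Qed.

Lemma convex_avg_iter_le Q (f : 'rV[R]_n -> R) (x : nat -> 'rV[R]_n) m :
  convex_set Q -> convex_fun_on Q f -> (forall k, Q (x k)) -> (0 < m)%N ->
  f (avg_iter x m) <= m%:R^-1 * \sum_(1 <= k < m.+1) f (x k).
Proof.
move=> cQ cf Qx; case: m => // m _; elim: m => [|m IH].
  by rewrite avg_iterS invr1 subrr scale0r addr0 scale1r big_nat1 mul1r.
set t : R := m.+2%:R^-1.
have t01 : 0 <= t <= 1 by rewrite invr_ge0 ler0n /= invf_le1 ?ler1n ?ltr0n.
have one_t : 1 - t = m.+1%:R * t.
  have m_ge0 : 0 <= m%:R :> R := ler0n R m.
  by rewrite /t -[m.+2%:R]natr1 -natr1; field; apply/lt0r_neq0; lra.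
rewrite avg_iterS -/t (big_nat_recr m.+2) //= mulrDr -/t.
apply: le_trans (cf _ _ _ (Qx _) (avg_iter_in cQ Qx (ltn0Sn m)) t01) _.
rewrite addrC lerD2r one_t -mulrA mulrCA; apply: ler_wpM2l; first by case/andP: t01.
by rewrite mulrC -ler_pdivlMr ?ltr0n // mulrC.
Qed.

End Rows.

Lemma telescope_avg_le (R : realFieldType) (a b : nat -> R) c m :
  (forall k, a k.+1 <= c + (b k - b k.+1)) -> (0 < m)%N ->
  m%:R^-1 * \sum_(1 <= k < m.+1) a k <= c + m%:R^-1 * (b 0%N - b m).
Proof.
move=> step m0.
have sum_le : \sum_(1 <= k < m.+1) a k <= m%:R * c + (b 0%N - b m).
  elim: m {m0} => [|m IH]; first by rewrite big_geq // mul0r subrr addr0.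
  by rewrite big_nat_recr //= -natr1; have := step m; lra.
have m_gt0 : 0 < m%:R :> R by rewrite ltr0n.
rewrite -ler_pdivlMl ?invr_gt0 // invrK mulrDr mulrA mulfV ?mul1r //.
exact: lt0r_neq0.
Qed.

Section Bregman.
Variables (R : realType) (n : nat) (d : 'rV[R]_n -> R).
Implicit Types (u v w y z : 'rV[R]_n) (t e : R).

Lemma bregman_three_point u v z :
  bregman d z u - bregman d z v - bregman d v u = 'd d v (z - v) - 'd d u (z - v).
Proof.
have split_du : 'd d u (z - u) = 'd d u (z - v) + 'd d u (v - u).
  by rewrite -linearD addrA subrK.
have -> : bregman d z u = d z - d u - ('d d u (z - v) + 'd d u (v - u)).
  by rewrite -split_du.
(* [ring] runs on abstracted variables: on the goal itself it would have to
   unify the normed-module copy of [R] carrying the differential's values with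
   [R], which is prohibitively slow. *)
have arith (dz du dv a b c : R) :
  dz - du - (a + b) - (dz - dv - c) - (dv - du - b) = c - a by ring.
exact: arith.
Qed.

Lemma bregman_segment u v y t :
  let z := v + t *: (y - v) in
  bregman d z u - bregman d z v - bregman d v u =
  t * (bregman d y u - bregman d y v - bregman d v u).
Proof.
move=> z; have zv : z - v = t *: (y - v) by rewrite /z addrAC subrr add0r.
have Dv : 'd d v (z - v) = t * 'd d v (y - v) by rewrite zv; exact: linearZ.
have Du : 'd d u (z - v) = t * 'd d u (y - v) by rewrite zv; exact: linearZ.
rewrite (bregman_three_point u v z) (bregman_three_point u v y).
exact: etrans (congr2 (fun a b : R => a - b) Dv Du) (esym (mulrBr t _ _)).
Qed.

Lemma bregman_shift_small v w e : differentiable d v -> 0 < e ->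
  exists2 t, 0 < t <= 1 & bregman d (v + t *: w) v <= e * t.
Proof.
move=> dv e0.
have : (fun h : R => h^-1 *: ((d \o shift v) (h *: w) - d v)) @ 0^' --> 'D_w d v.
  exact: diff_derivable.
rewrite deriveE // => /cvgrPdist_lt /(_ e e0) /nbhs_ballP[r /= r0 near_r].
pose t := Num.min (r / 2) 1.
have t0 : 0 < t by rewrite lt_min ltr01 andbT divr_gt0.
have tr : t < r by rewrite gt_min ltr_pdivrMr // ltr_pMr // ltr1n.
have := near_r t; rewrite /ball /= sub0r normrN gtr0_norm // => /(_ tr (lt0r_neq0 t0)).
rewrite distrC => /(le_lt_trans (ler_norm _)) /ltW quotient_le.
exists t; first by rewrite t0 ge_min lexx orbT.
have Dw : 'd d v (v + t *: w - v) = t * 'd d v w.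
  by rewrite addrAC subrr add0r; exact: linearZ.
have -> : bregman d (v + t *: w) v = t * (t^-1 * (d (t *: w + v) - d v) - 'd d v w).
  by rewrite /bregman Dw mulrBr mulrA mulfV ?mul1r ?(addrC v) // lt0r_neq0.
by rewrite mulrC ler_pM2r.
Qed.

Lemma bregman_ge_half_sq Q N u v : strongly_convex1 Q N d -> Q u -> Q v ->
  2^-1 * N (u - v) ^+ 2 <= bregman d u v.
Proof. by move=> [_ sc] Qu Qv; have := sc u v Qu Qv; rewrite /bregman; lra. Qed.

Lemma bregman_ge0 Q N u v : strongly_convex1 Q N d -> Q u -> Q v -> 0 <= bregman d u v.
Proof.
move=> sc Qu Qv; apply: le_trans (bregman_ge_half_sq sc Qu Qv).
by rewrite mulr_ge0 ?invr_ge0 ?ler0n ?sqr_ge0.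
Qed.

Lemma bregman_prox_ineq Q psi L u v g y :
  convex_set Q -> convex_fun_on Q psi -> differentiable d v -> 0 < L -> Q v -> Q y ->
  subgrad_on Q (fun z => psi z + L * bregman d z u) v g ->
  psi v + L * bregman d v u + dotv g (y - v) + L * bregman d y v
    <= psi y + L * bregman d y u.
Proof.
(* Test the subgradient inequality at z = v + t (y - v): along this segment
   everything is affine in t except V(z, v) = o(t). *)
move=> cQ cpsi dv L0 Qv Qy sg.
apply/ler_addgt0Pr => e e0.
have [t /andP[t0 t1] small] := bregman_shift_small (y - v) dv (divr_gt0 e0 L0).
set z := v + t *: (y - v).
have ez : z = t *: y + (1 - t) *: v by apply/rowP => i; rewrite !mxE; ring.
have Qz : Q z by rewrite ez; apply: convex_set_comb; rewrite ?(ltW t0).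
have zv : z - v = t *: (y - v) by rewrite /z addrAC subrr add0r.
have sgz := sg z Qz; rewrite /= zv dotvZr in sgz.
have psiz : psi z <= t * psi y + (1 - t) * psi v.
  by rewrite ez; apply: cpsi; rewrite ?(ltW t0).
have segment : L * (bregman d z u - bregman d z v - bregman d v u) =
    t * (L * (bregman d y u - bregman d y v - bregman d v u)).
  by rewrite (bregman_segment u v y t) mulrCA.
have small_L : L * bregman d z v <= e * t.
  by rewrite -ler_pdivlMl // mulrA [L^-1 * e]mulrC.
suff : t * (psi v + L * bregman d v u + dotv g (y - v) + L * bregman d y v
         - (psi y + L * bregman d y u + e)) <= 0.
  by rewrite pmulr_rle0 // subr_le0.
lra.
Qed.

Lemma model_prox_step Q N f fd psi L delta tdelta xs u v g :
  convex_set Q -> strongly_convex1 Q N d -> 0 < L ->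
  dL_model Q N f fd psi delta L -> Q xs -> Q u -> Q v ->
  subgrad_on Q (fun z => psi z u + L * bregman d z u) v g ->
  dotv g (v - xs) <= tdelta ->
  f v - f xs <= L * bregman d xs u - L * bregman d xs v + tdelta + delta.
Proof.
move=> cQ sc L0 model Qxs Qu Qv sg g_xs.
have [cpsi _ bounds] := model u Qu.
have /andP[_ upper_v] := bounds v Qv.
have /andP[lower_xs _] := bounds xs Qxs.
have prox := bregman_prox_ineq cQ cpsi (sc.1 v Qv) L0 Qv Qxs sg.
rewrite -opprB dotvNr in prox.
have : L * (2^-1 * N (v - u) ^+ 2) <= L * bregman d v u.
  by rewrite ler_pM2l // (bregman_ge_half_sq sc).
lra.
Qed.

End Bregman.

Theorem theorem3p1 (R : realType) (n : nat) (Q : set 'rV[R]_n)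
  (f : 'rV[R]_n -> R) (N : 'rV[R]_n -> R) (d : 'rV[R]_n -> R)
  (fd : 'rV[R]_n -> R) (psi : 'rV[R]_n -> 'rV[R]_n -> R)
  (L delta tdelta : R) (xs : 'rV[R]_n) (x : nat -> 'rV[R]_n) :
  convex_set Q -> convex_fun_on Q f ->
  Q xs -> (forall y, Q y -> f xs <= f y) ->
  is_norm N -> strongly_convex1 Q N d ->
  0 < L -> 0 <= delta -> 0 <= tdelta ->
  dL_model Q N f fd psi delta L ->
  (forall k, Q (x k)) ->
  (forall k, exists g : 'rV[R]_n,
      subgrad_on Q (fun z => psi z (x k) + L * bregman d z (x k)) (x k.+1) g /\
      dotv g (x k.+1 - xs) <= tdelta) ->
  (forall Nit : nat, (1 <= Nit)%N ->
     f (avg_iter x Nit) - f xs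
       <= L * bregman d xs (x 0%N) / Nit%:R + tdelta + 2 * delta) /\
  (forall m : nat, (1 <= m)%N ->
     tdelta + 2 * delta <= f (avg_iter x m) - f xs ->
     bregman d xs (x m) <= bregman d xs (x 0%N)).
Proof.
move=> cQ cf Qxs _ _ sc L0 delta0 _ model Qx prox.
have step k : f (x k.+1) <= f xs + tdelta + delta +
    (L * bregman d xs (x k) - L * bregman d xs (x k.+1)).
  have [g [sg g_xs]] := prox k.
  by have := model_prox_step cQ sc L0 model Qxs (Qx k) (Qx k.+1) sg g_xs; lra.
have gap m : (0 < m)%N -> f (avg_iter x m) - f xs <=
    tdelta + delta + m%:R^-1 * (L * bregman d xs (x 0%N) - L * bregman d xs (x m)).
  move=> m0; have := telescope_avg_le (a := fun k => f (x k))
    (b := fun k => L * bregman d xs (x k)) step m0.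
  by have := convex_avg_iter_le cQ cf Qx m0; lra.
have B_ge0 m : 0 <= L * bregman d xs (x m).
  by rewrite mulr_ge0 ?(ltW L0) // (bregman_ge0 sc).
have inv_gt0 m : (0 < m)%N -> 0 < m%:R^-1 :> R by rewrite invr_gt0 ltr0n.
split=> m m0; have := gap m m0; have := inv_gt0 m m0.
- by have := B_ge0 m; rewrite [_ / _]mulrC; nra.
- move=> inv_m_gt0 gap_le gap_ge.
  have : 0 <= m%:R^-1 * (L * bregman d xs (x 0%N) - L * bregman d xs (x m)) by lra.
  by rewrite pmulr_rge0 // subr_ge0 ler_pM2l.
Qed.
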